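(* Let $n\ge1$ and $1\le k\le d$ be integers, $p=k/d$, and $\mathbf{e}_1,\dots,\mathbf{e}_n\in\mathbb{R}^d$. Let $F_i(\mathbf{w})=\frac12\|\mathbf{w}-\mathbf{e}_i\|_2^2$, $F(\mathbf{w})=\frac1n\sum_{i=1}^nF_i(\mathbf{w})$, and $\mathbf{w}^*=\frac1n\sum_{i=1}^n\mathbf{e}_i$ its minimizer. Consider the following algorithm with step size $\eta>0$: start from arbitrary $\mathbf{w}^{(0)}\in\mathbb{R}^d$ and $\mathbf{b}_i^{(0)}=\mathbf{0}$ for all $i$. At round $t=0,1,2,\dots$: each node $i$ computes $\mathbf{x}_i^{(t)}=\nabla F_i(\mathbf{w}^{(t)})=\mathbf{w}^{(t)}-\mathbf{e}_i$ and independently (across nodes and rounds) chooses a uniformly random subset $S_i^{(t)}\subseteq\{1,\dots,d\}$ of size $k$, sending $x_{ij}^{(t)}$ for $j\in S_i^{(t)}$; the server forms $\mathbf{h}_i'^{(t)}$ with $h'^{(t)}_{ij}=b^{(t)}_{ij}$ if $j\notin S_i^{(t)}$ and $h'^{(t)}_{ij}=b^{(t)}_{ij}+\frac dk(x^{(t)}_{ij}-b^{(t)}_{ij})$ if $j\in S_i^{(t)}$, sets $\hat{\mathbf{x}}^{(t)}=\frac1n\sum_i\mathbf{h}_i'^{(t)}$ and $\mathbf{w}^{(t+1)}=\mathbf{w}^{(t)}-\eta\hat{\mathbf{x}}^{(t)}$, and updates $b^{(t+1)}_{ij}=x^{(t)}_{ij}$ if $j\in S_i^{(t)}$ and $b^{(t+1)}_{ij}=b^{(t)}_{ij}$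 otherwise. If $$\eta\le\min\Big\{\frac{1}{1+\frac8n\big(\frac dk-1\big)},\ \frac p2\Big\},$$ then for all $t\ge0$, $$\mathbb{E}\big[\|\mathbf{w}^{(t+1)}-\mathbf{w}^*\|_2^2\big]\le(1-\eta)^{t+1}\Big[\|\mathbf{w}^{(0)}-\mathbf{w}^*\|_2^2+\frac1n\sum_{i=1}^n\|\nabla F_i(\mathbf{w}^* )\|_2^2\Big],$$ where the expectation is over all the random subsets.
   Context: Gradient descent on a heterogeneous quadratic objective with gradients aggregated by the Rand-$k$-Temporal estimator, where the server's stored vectors $\mathbf{b}_i$ are the most recently received values of each coordinate. *)

From mathcomp Require Import all_boot all_order all_algebra.
From mathcomp Require Import reals.
Set Implicit Arguments. Unset Strict Implicit. Unset Printing Implicit Defensive.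
Import Order.TTheory GRing.Theory Num.Theory.
Local Open Scope ring_scope.

Definition sqnorm (R : realType) (d : nat) (v : 'I_d -> R) : R :=
  \sum_(j < d) v j ^+ 2.

Definition wstar (R : realType) (n d : nat) (e : 'I_n -> 'I_d -> R) : 'I_d -> R :=
  fun j => n%:R^-1 * \sum_(i < n) e i j.

(* gradient of F_i(w) = 1/2 ||w - e_i||^2 *)
Definition gradF (R : realType) (n d : nat) (e : 'I_n -> 'I_d -> R)
  (i : 'I_n) (w : 'I_d -> R) : 'I_d -> R := fun j => w j - e i j.

(* State of the algorithm: (w, (b_i)_i). *)
Definition rkt_state (R : realType) (n d : nat) : Type :=
  (('I_d -> R) * ('I_n -> 'I_d -> R))%type.

Definition rkt_step (R : realType) (n d k : nat) (eta : R)
  (e : 'I_n -> 'I_d -> R) (S : 'I_n -> {set 'I_d}) (st : rkt_state R n d)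
  : rkt_state R n d :=
  let w := st.1 in let b := st.2 in
  let x := fun i => gradF e i w in
  let h := fun i j => if j \in S i then b i j + (d%:R / k%:R) * (x i j - b i j)
                      else b i j in
  let xhat := fun j => n%:R^-1 * \sum_(i < n) h i j in
  (fun j => w j - eta * xhat j,
   fun i j => if j \in S i then x i j else b i j).

(* The state (w^(t), b^(t)) for the subset schedule sched t i = S_i^(t). *)
Fixpoint rkt_iter (R : realType) (n d k : nat) (eta : R)
  (e : 'I_n -> 'I_d -> R) (w0 : 'I_d -> R)
  (sched : nat -> 'I_n -> {set 'I_d}) (t : nat) : rkt_state R n d :=
  match t with
  | 0 => (w0, fun _ _ => 0)
  | t'.+1 => rkt_step k eta e (sched t') (@rkt_iter R n d k eta e w0 sched t')
  end.

Definition valid_scheds (T n d k : nat) : {set {ffun 'I_T * 'I_n -> {set 'I_d}}} :=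
  [set f : {ffun 'I_T * 'I_n -> {set 'I_d}} | [forall x, #|f x| == k]].

Definition sched_of (T n d : nat) (f : {ffun 'I_T * 'I_n -> {set 'I_d}})
  : nat -> 'I_n -> {set 'I_d} :=
  fun s i => match @insub _ (fun m => m < T)%N 'I_T s with
             | Some s' => f (s', i)
             | None => set0
             end.

(* Expectation over independent uniformly random k-subsets S_i^(t),
   i < n, t < T (uniform average over all such choices). *)
Definition expect_sched (R : realType) (T n d k : nat)
  (Q : (nat -> 'I_n -> {set 'I_d}) -> R) : R :=
  (\sum_(f in valid_scheds T n d k) Q (sched_of f)) / #|valid_scheds T n d k|%:R.

(* Everything decouples over the coordinates j.  Writing u = w_j - wstar_j and
   D_i = b_ij - (grad F_i(wstar))_j, one round maps
     u   |-> (1 - eta) u - eta/n * sum_i (chi_i d/k - 1) (u - D_i),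
     D_i |-> D_i + chi_i (u - D_i),
   where the chi_i = [j \in S_i] are independent Bernoulli(k/d) variables, so
   the noise is a sum of independent centred terms.  Hence the expected
   potential u^2 + A/n sum_i D_i^2, with A = 4 eta^2 (d/k - 1)/n * d/k, shrinks
   by the factor 1 - eta in every round under the two step-size conditions.
   The average over the subsets of rounds 0..T factors as an average over
   rounds 0..T-1 of an average over round T, and A <= 1 bounds the initial
   potential. *)

From mathcomp Require Import all_boot all_order all_algebra perm.
From mathcomp Require Import reals.
From mathcomp Require Import ring lra.
From Stdlib Require Import FunctionalExtensionality.
Set Implicit Arguments. Unset Strict Implicit. Unset Printing Implicit Defensive.
Import Order.TTheory GRing.Theory Num.Theory.
Local Open Scope ring_scope.

Section Average.
Variables (R : numFieldType) (T : finType).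
Implicit Types (A : {set T}) (F G : T -> R).

(* Junk value 0 on the empty set. *)
Definition avg A F : R := (\sum_(x in A) F x) / #|A|%:R.

Lemma eq_avg A F G : {in A, F =1 G} -> avg A F = avg A G.
Proof. by move=> FG; rewrite /avg (eq_bigr G). Qed.

Lemma avgD A F G : avg A (fun x => F x + G x) = avg A F + avg A G.
Proof. by rewrite /avg big_split mulrDl. Qed.

Lemma avgMl A c F : avg A (fun x => c * F x) = c * avg A F.
Proof. by rewrite /avg -mulr_sumr mulrA. Qed.

Lemma avg_sum A (I : Type) (r : seq I) (P : pred I) (F : I -> T -> R) :
  avg A (fun x => \sum_(i <- r | P i) F i x) = \sum_(i <- r | P i) avg A (F i).
Proof. by rewrite /avg exchange_big mulr_suml. Qed.

Lemma avg_cst A c : A != set0 -> avg A (fun _ => c) = c.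
Proof.
move=> A0; rewrite /avg sumr_const -[c *+ _]mulr_natr mulfK //.
by rewrite pnatr_eq0 -lt0n card_gt0.
Qed.

Lemma ler_avg A F G : {in A, forall x, F x <= G x} -> avg A F <= avg A G.
Proof.
by move=> FG; rewrite ler_wpM2r ?invr_ge0 ?ler0n // ler_sum // => x /FG.
Qed.

Lemma avg_sqr_centered A a c F : A != set0 -> avg A F = 0 ->
  avg A (fun x => (a - c * F x) ^+ 2) = a ^+ 2 + c ^+ 2 * avg A (fun x => F x ^+ 2).
Proof.
move=> A0 F_centered.
have expand x : (a - c * F x) ^+ 2 = a ^+ 2 + (- (2 * a * c) * F x + c ^+ 2 * F x ^+ 2).
  by rewrite sqrrB exprMn; ring.
by under eq_avg do rewrite expand; rewrite !avgD !avgMl avg_cst // F_centered mulr0 add0r.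
Qed.

End Average.

Section ChangeOfVariables.
Variables (R : numFieldType) (T1 T2 : finType).

Lemma avg_setX (A : {set T1}) (B : {set T2}) (F : T1 * T2 -> R) :
  avg (setX A B) F = avg A (fun a => avg B (fun b => F (a, b))).
Proof.
have sumX : \sum_(p in setX A B) F p = \sum_(a in A) \sum_(b in B) F (a, b).
  by rewrite pair_big_dep; apply: eq_big => -[a b] //; rewrite inE.
rewrite /avg sumX !mulr_suml; apply: eq_bigr => a _.
rewrite cardsX natrM invfM !mulr_suml; apply: eq_bigr => b _.
by rewrite mulrA mulrAC.
Qed.

Lemma avg_reindex (A : {set T1}) (B : {set T2}) (h : T1 -> T2) (F : T2 -> R) :
  bijective h -> (forall x, (h x \in B) = (x \in A)) ->
  avg B F = avg A (fun x => F (h x)).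
Proof.
move=> h_bij memh.
have sum_h (G : T2 -> R) : \sum_(y in B) G y = \sum_(x in A) G (h x).
  by rewrite (reindex h) //=; [apply: eq_bigl => x; rewrite memh | exact: onW_bij].
by rewrite /avg sum_h -!sum1_card !natr_sum sum_h.
Qed.

End ChangeOfVariables.

Section IndependentFamily.
Variables (R : numFieldType) (I T : finType) (K : {set T}).
Hypothesis K_neq0 : K != set0.

Definition ffuns_on : {set {ffun I -> T}} := [set h : {ffun I -> T} | [forall i, h i \in K]].

Lemma ffuns_on_neq0 : ffuns_on != set0.
Proof.
have /set0Pn [x Kx] := K_neq0.
by apply/set0Pn; exists [ffun=> x]; rewrite inE; apply/forallP => i; rewrite ffunE.
Qed.

Lemma avg_ffuns_on_prod (F : I -> T -> R) :
  avg ffuns_on (fun h => \prod_i F i (h i)) = \prod_i avg K (F i).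
Proof.
have sum_prod : \sum_(h in ffuns_on) \prod_i F i (h i) = \prod_i \sum_(x in K) F i x.
  rewrite (bigA_distr_big (mem K)); apply: eq_bigl => h.
  by rewrite inE; apply/forallP/ffun_onP.
have card_ffuns : #|ffuns_on| = (#|K| ^ #|I|)%N.
  rewrite -card_ffun_on; apply: eq_card => h.
  by rewrite inE; apply/forallP/ffun_onP.
by rewrite /avg sum_prod card_ffuns natrX -prodr_const prodf_div.
Qed.

Lemma avg_ffuns_on_prod_in (J : {pred I}) (F : I -> T -> R) :
  avg ffuns_on (fun h => \prod_(i in J) F i (h i)) = \prod_(i in J) avg K (F i).
Proof.
rewrite big_mkcond /=.
transitivity (\prod_i avg K (fun x => if i \in J then F i x else 1)).
  by rewrite -avg_ffuns_on_prod; apply: eq_avg => h _; rewrite big_mkcond.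
by apply: eq_bigr => i _; case: (i \in J); rewrite ?avg_cst.
Qed.

Lemma avg_ffuns_on1 (i : I) (G : T -> R) :
  avg ffuns_on (fun h => G (h i)) = avg K G.
Proof.
have := avg_ffuns_on_prod_in (pred1 i) (fun _ => G).
by rewrite (big_pred1 i) // => <-; apply: eq_avg => h _; rewrite (big_pred1 i).
Qed.

Lemma avg_ffuns_on2 (i i' : I) (G H : T -> R) : i != i' ->
  avg ffuns_on (fun h => G (h i) * H (h i')) = avg K G * avg K H.
Proof.
move=> neq_ii'.
have := avg_ffuns_on_prod_in (mem [set i; i']) (fun l => if l == i then G else H).
rewrite big_setU1 ?big_set1 ?inE //= eqxx eq_sym (negbTE neq_ii') => <-.
by apply: eq_avg => h _; rewrite big_setU1 ?big_set1 ?inE //= eqxx eq_sym (negbTE neq_ii').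
Qed.

Lemma avg_ffuns_on_sqr_sum (phi : I -> T -> R) :
  (forall i, avg K (phi i) = 0) ->
  avg ffuns_on (fun h => (\sum_i phi i (h i)) ^+ 2) =
  \sum_i avg K (fun x => phi i x ^+ 2).
Proof.
move=> centered.
under eq_avg => h _ do rewrite expr2 mulr_suml; rewrite avg_sum.
apply: eq_bigr => i _; under eq_avg => h _ do rewrite mulr_sumr; rewrite avg_sum.
rewrite (bigD1 i) //= big1 ?addr0 => [|i' neq_i'i].
  by rewrite -(avg_ffuns_on1 i); apply: eq_avg => h _; rewrite expr2.
by rewrite avg_ffuns_on2 1?eq_sym // centered mul0r.
Qed.

End IndependentFamily.

Section RandomSubset.
Variables (R : numFieldType) (T : finType) (k : nat).

Definition ksubsets : {set {set T}} := [set S : {set T} | #|S| == k].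

Lemma ksubsets_neq0 : (k <= #|T|)%N -> ksubsets != set0.
Proof. by move=> le_kT; rewrite -card_gt0 card_draws bin_gt0. Qed.

Lemma avg_ksubsets_mem_sym (x y : T) :
  avg ksubsets (fun S => (x \in S)%:R : R) = avg ksubsets (fun S => (y \in S)%:R).
Proof.
have swap_inj : injective (fun S : {set T} => tperm x y @^-1: S).
  move=> S1 S2 /setP eqS; apply/setP => z; have := eqS (tperm x y z).
  by rewrite !inE tpermK.
rewrite /avg (reindex_inj swap_inj) /=; congr (_ / _); apply: eq_big => S /=.
  by rewrite !inE card_preimset //; exact: perm_inj.
by move=> _; rewrite inE tpermL.
Qed.

Lemma avg_ksubsets_mem (x : T) : (k <= #|T|)%N ->
  avg ksubsets (fun S => (x \in S)%:R : R) = k%:R / #|T|%:R.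
Proof.
move=> le_kT.
have T_neq0 : (#|T|%:R : R) != 0 by rewrite pnatr_eq0 -lt0n; apply/card_gt0P; exists x.
have sum_mem : \sum_(y : T) avg ksubsets (fun S => (y \in S)%:R : R) = k%:R.
  transitivity (avg ksubsets (fun S => \sum_(y : T) (y \in S)%:R : R)).
    by rewrite avg_sum.
  rewrite -[RHS](avg_cst _ (ksubsets_neq0 le_kT)); apply: eq_avg => S.
  rewrite inE => /eqP <-; rewrite -sum1_card natr_sum [RHS]big_mkcond.
  by apply: eq_bigr => y _; case: (y \in S).
apply: (mulIf T_neq0); rewrite divfK // -sum_mem.
rewrite (eq_bigr (fun _ => avg ksubsets (fun S => (x \in S)%:R))) => [|y _].
  by rewrite sumr_const mulr_natr.
exact: avg_ksubsets_mem_sym.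
Qed.

Lemma avg_ksubsets_bool (x : T) (phi : bool -> R) : (k <= #|T|)%N ->
  avg ksubsets (fun S => phi (x \in S)) =
    k%:R / #|T|%:R * phi true + (1 - k%:R / #|T|%:R) * phi false.
Proof.
move=> le_kT.
have phiE b : phi b = phi false + (phi true - phi false) * b%:R.
  by case: b; rewrite ?mulr1 ?mulr0 ?addr0 // addrC subrK.
under eq_avg do rewrite phiE.
rewrite avgD avgMl avg_cst ?ksubsets_neq0 // avg_ksubsets_mem //.
by ring.
Qed.

End RandomSubset.

Section ScheduleExtension.
Variables (T n : nat) (U : finType).
Implicit Types (g : {ffun 'I_T * 'I_n -> U}) (h : {ffun 'I_n -> U}).

Definition extend_sched g h : {ffun 'I_T.+1 * 'I_n -> U} :=
  [ffun p => if unlift ord_max p.1 is Some s then g (s, p.2) else h p.2].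

Lemma extend_sched_bij : bijective (fun gh => extend_sched gh.1 gh.2).
Proof.
pose split_sched (f : {ffun 'I_T.+1 * 'I_n -> U}) :
    {ffun 'I_T * 'I_n -> U} * {ffun 'I_n -> U} :=
  ([ffun p => f (lift ord_max p.1, p.2)], [ffun i => f (ord_max, i)]).
exists split_sched.
  move=> [g h]; congr (_, _); apply/ffunP => p; rewrite !ffunE ?liftK ?unlift_none //.
  by case: p.
move=> f; apply/ffunP => -[s i]; rewrite ffunE /=.
by case: unliftP => [s'|] -> //=; rewrite ffunE.
Qed.

Lemma mem_extend_sched (K : {set U}) g h :
  (extend_sched g h \in ffuns_on _ K) = (g \in ffuns_on _ K) && (h \in ffuns_on _ K).
Proof.
rewrite !inE; apply/forallP/andP => [ext_K | [/forallP gK /forallP hK] [s i]].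
  split; apply/forallP.
    by move=> [s i]; have := ext_K (lift ord_max s, i); rewrite ffunE /= liftK.
  by move=> i; have := ext_K (ord_max, i); rewrite ffunE /= unlift_none.
by rewrite ffunE /=; case: unliftP => [s'|] _ /=; [exact: (gK (s', i)) | exact: hK].
Qed.

End ScheduleExtension.

Section ExtendedScheduleOf.
Variables (T n d : nat).
Implicit Types (g : {ffun 'I_T * 'I_n -> {set 'I_d}}) (h : {ffun 'I_n -> {set 'I_d}}).

Lemma sched_of_extend_lt g h s i : (s < T)%N ->
  sched_of (extend_sched g h) s i = sched_of g s i.
Proof.
move=> lt_sT; rewrite /sched_of.
case: insubP => [s1 _ val_s1|]; last by rewrite ltnS ltnW.
case: insubP => [s2 _ val_s2|]; last by rewrite lt_sT.
rewrite ffunE /=; have -> : s1 = lift ord_max s2.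
  by apply: val_inj; rewrite val_s1 /= /bump leqNgt ltn_ord val_s2.
by rewrite liftK.
Qed.

Lemma sched_of_extend_last g h i : sched_of (extend_sched g h) T i = h i.
Proof.
rewrite /sched_of; case: insubP => [s1 _ val_s1|]; last by rewrite ltnS leqnn.
have -> : s1 = ord_max by apply: val_inj.
by rewrite ffunE /= unlift_none.
Qed.

End ExtendedScheduleOf.

(* For one coordinate: U = u^2, SD = sum_i D_i^2, SV = sum_i (u - D_i)^2, and the
   left-hand side is the expected next potential. *)
Lemma lyap_contraction (R : realFieldType) (eta p q m A U SD SV : R) :
  0 < eta -> p * q = 1 -> 0 < m -> 1 <= q -> A = 4 * eta ^+ 2 * ((q - 1) / m) * q ->
  eta * (1 + 8 * ((q - 1) / m)) <= 1 -> eta <= p / 2 ->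
  0 <= U -> 0 <= SD -> SV <= 2 * m * U + 2 * SD ->
  (1 - eta) ^+ 2 * U + eta ^+ 2 * (q - 1) / m ^+ 2 * SV + A / m * (m * p * U + (1 - p) * SD)
  <= (1 - eta) * (U + A / m * SD).
Proof.
move=> eta_gt0 pq1 m_gt0 q_ge1 -> eta_r eta_p U_ge0 SD_ge0 SV_le.
have m_neq0 : m != 0 by rewrite gt_eqF.
set r := (q - 1) / m in eta_r *; set D := SD / m.
have r_ge0 : 0 <= r by rewrite divr_ge0 ?subr_ge0 // ltW.
have D_ge0 : 0 <= D by rewrite divr_ge0 // ltW.
have c_ge0 : 0 <= eta ^+ 2 * r by rewrite mulr_ge0 ?sqr_ge0.
have SV_term : eta ^+ 2 * (q - 1) / m ^+ 2 * SV <= 2 * eta ^+ 2 * r * (U + D).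
  have -> : 2 * eta ^+ 2 * r * (U + D) = eta ^+ 2 * (q - 1) / m ^+ 2 * (2 * m * U + 2 * SD).
    by rewrite /r /D; field.
  by rewrite ler_wpM2l // divr_ge0 ?mulr_ge0 ?sqr_ge0 ?subr_ge0 // ltW.
have -> : 4 * eta ^+ 2 * r * q / m * (m * p * U + (1 - p) * SD)
    = 4 * eta ^+ 2 * r * ((p * q) * U + (q - p * q) * D).
  by rewrite /D; field.
have -> : (1 - eta) * (U + 4 * eta ^+ 2 * r * q / m * SD)
    = (1 - eta) * U + 4 * eta ^+ 2 * r * (q - eta * q) * D.
  by rewrite /D; field.
have coefU : ((1 - eta) ^+ 2 + 6 * (eta ^+ 2 * r)) * U <= (1 - eta) * U.
  apply: ler_wpM2r => //.
  have : eta * (1 + 6 * r) <= 1 by have := mulr_ge0 (ltW eta_gt0) r_ge0; lra.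
  by move/(ler_wpM2l (ltW eta_gt0)); lra.
have coefD : eta ^+ 2 * r * (2 + 4 * (q - 1)) * D <= eta ^+ 2 * r * (4 * (q - eta * q)) * D.
  apply: ler_wpM2r => //; apply: ler_wpM2l => //.
  by have := ler_wpM2r (le_trans ler01 q_ge1) eta_p; rewrite mulrAC pq1; lra.
rewrite pq1; lra.
Qed.

Lemma lyap_weight_le1 (R : realFieldType) (eta p q m : R) :
  0 < eta -> p * q = 1 -> 0 < m -> 1 <= q ->
  eta * (1 + 8 * ((q - 1) / m)) <= 1 -> eta <= p / 2 ->
  4 * eta ^+ 2 * ((q - 1) / m) * q <= 1.
Proof.
move=> eta_gt0 pq1 m_gt0 q_ge1 eta_r eta_p.
set r := (q - 1) / m in eta_r *.
have r_ge0 : 0 <= r by rewrite divr_ge0 ?subr_ge0 // ltW.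
have eta_q : eta * q <= 1 / 2.
  by have := ler_wpM2r (le_trans ler01 q_ge1) eta_p; rewrite mulrAC pq1; lra.
have eta_r8 : eta * r <= 1 / 8 by have := mulr_ge0 (ltW eta_gt0) r_ge0; lra.
have : (eta * q) * (eta * r) <= 1 / 2 * (1 / 8).
  have eta_ge0 := ltW eta_gt0.
  by apply: ler_pM => //; apply: mulr_ge0 => //; apply: le_trans q_ge1.
lra.
Qed.

Section RandKTemporal.
Variables (R : realType) (n d k : nat) (eta : R) (e : 'I_n -> 'I_d -> R).
Implicit Types (st : rkt_state R n d).

Definition werr st j := st.1 j - wstar e j.
Definition berr st i j := st.2 i j - gradF e i (wstar e) j.

Local Notation q := (d%:R / k%:R : R).

Lemma rkt_step_werr (S : 'I_n -> {set 'I_d}) st j : (0 < n)%N ->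
  werr (rkt_step k eta e S st) j = (1 - eta) * werr st j
    - eta / n%:R * \sum_i ((j \in S i)%:R * q - 1) * (werr st j - berr st i j).
Proof.
move=> n_gt0; have n_neq0 : (n%:R : R) != 0 by rewrite pnatr_eq0 -lt0n.
case: st => w b; rewrite /werr /berr /wstar /gradF /=.
have summand i : ((j \in S i)%:R * q - 1) * (w j - n%:R^-1 * \sum_l e l j
        - (b i j - (n%:R^-1 * \sum_l e l j - e i j)))
    = (if j \in S i then b i j + q * (w j - e i j - b i j) else b i j) - w j + e i j.
  by case: (j \in S i) => /=; ring.
rewrite (eq_bigr _ (fun i _ => summand i)) !big_split /= sumrN sumr_const card_ord.
by rewrite -[w j *+ n]mulr_natl; field.
Qed.

Lemma rkt_step_berr (S : 'I_n -> {set 'I_d}) st i j :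
  berr (rkt_step k eta e S st) i j = berr st i j + (j \in S i)%:R * (werr st j - berr st i j).
Proof.
by case: st => w b; rewrite /werr /berr /= /gradF; case: (j \in S i) => /=; ring.
Qed.

Lemma eq_rkt_iter w0 (s1 s2 : nat -> 'I_n -> {set 'I_d}) t :
  (forall s i, (s < t)%N -> s1 s i = s2 s i) ->
  rkt_iter k eta e w0 s1 t = rkt_iter k eta e w0 s2 t.
Proof.
elim: t => //= t IH eq_s12.
rewrite IH => [|s i /ltnW]; last exact: eq_s12.
by congr rkt_step; apply: functional_extensionality => i; apply: eq_s12.
Qed.

Lemma rkt_iter_extend w0 T
    (g : {ffun 'I_T * 'I_n -> {set 'I_d}}) (h : {ffun 'I_n -> {set 'I_d}}) :
  rkt_iter k eta e w0 (sched_of (extend_sched g h)) T.+1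
  = rkt_step k eta e (fun i => h i) (rkt_iter k eta e w0 (sched_of g) T).
Proof.
rewrite /=; congr rkt_step.
  by apply: functional_extensionality => i; apply: sched_of_extend_last.
by apply: eq_rkt_iter => s i; apply: sched_of_extend_lt.
Qed.

Lemma valid_schedsE T : valid_scheds T n d k = ffuns_on ('I_T * 'I_n)%type (ksubsets 'I_d k).
Proof. by apply/setP => f; rewrite !inE; apply: eq_forallb => x; rewrite inE. Qed.

Definition lyap (A : R) st := sqnorm (werr st) + A / n%:R * \sum_i sqnorm (berr st i).

Lemma lyap_coordE A st :
  lyap A st = \sum_j (werr st j ^+ 2 + A / n%:R * \sum_i berr st i j ^+ 2).
Proof. by rewrite /lyap /sqnorm big_split /= -mulr_sumr exchange_big. Qed.

Hypotheses (n_gt0 : (0 < n)%N) (k_gt0 : (0 < k)%N) (k_le_d : (k <= d)%N).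

Local Notation p := (k%:R / d%:R : R).
Local Notation W := (ffuns_on 'I_n (ksubsets 'I_d k)).

Let n_neq0 : (n%:R : R) != 0. Proof. by rewrite pnatr_eq0 -lt0n. Qed.
Let k_neq0 : (k%:R : R) != 0. Proof. by rewrite pnatr_eq0 -lt0n. Qed.
Let d_neq0 : (d%:R : R) != 0. Proof. by rewrite pnatr_eq0 -lt0n (leq_trans k_gt0). Qed.

Let pq1 : p * q = 1.
Proof. by field; rewrite k_neq0 d_neq0. Qed.

Let ksubsets_neq0 : ksubsets 'I_d k != set0.
Proof. by rewrite ksubsets_neq0 // card_ord. Qed.

Let avg_mem (j : 'I_d) (phi : bool -> R) :
  avg (ksubsets 'I_d k) (fun S => phi (j \in S)) = p * phi true + (1 - p) * phi false.
Proof. by rewrite avg_ksubsets_bool card_ord. Qed.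

Lemma avg_werr_step_sqr st j :
  avg W (fun h => werr (rkt_step k eta e (fun i => h i) st) j ^+ 2)
  = (1 - eta) ^+ 2 * werr st j ^+ 2
    + eta ^+ 2 * (q - 1) / n%:R ^+ 2 * \sum_i (werr st j - berr st i j) ^+ 2.
Proof.
pose z i (b : bool) := (b%:R * q - 1) * (werr st j - berr st i j).
have z_centered i : avg (ksubsets 'I_d k) (fun S => z i (j \in S)) = 0.
  by rewrite avg_mem /z /=; field; rewrite k_neq0.
have z_sqr i : avg (ksubsets 'I_d k) (fun S => z i (j \in S) ^+ 2)
    = (q - 1) * (werr st j - berr st i j) ^+ 2.
  by rewrite (avg_mem j (fun b => z i b ^+ 2)) /z /=; field; rewrite k_neq0.
under eq_avg do rewrite rkt_step_werr //.
rewrite (avg_sqr_centered _ _ (ffuns_on_neq0 _ ksubsets_neq0)); last first.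
  rewrite avg_sum big1 // => i _.
  by rewrite (avg_ffuns_on1 ksubsets_neq0 _ (fun S => z i (j \in S))); apply: z_centered.
rewrite (avg_ffuns_on_sqr_sum ksubsets_neq0 z_centered) (eq_bigr _ (fun i _ => z_sqr i)).
rewrite exprMn !mulr_sumr; congr (_ + _); apply: eq_bigr => i _.
by field; rewrite n_neq0 k_neq0.
Qed.

Lemma avg_berr_step_sqr st i j :
  avg W (fun h => berr (rkt_step k eta e (fun i => h i) st) i j ^+ 2)
  = p * werr st j ^+ 2 + (1 - p) * berr st i j ^+ 2.
Proof.
under eq_avg do rewrite rkt_step_berr.
rewrite (avg_ffuns_on1 ksubsets_neq0 i
  (fun S => (berr st i j + (j \in S)%:R * (werr st j - berr st i j)) ^+ 2)).
by rewrite (avg_mem j (fun b => (berr st i j + b%:R * (werr st j - berr st i j)) ^+ 2)) /=; ring.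
Qed.

Hypotheses (eta_gt0 : 0 < eta) (eta_le_inv : eta <= (1 + 8 / n%:R * (q - 1))^-1)
  (eta_le_p : eta <= p / 2).

Local Notation A := (4 * eta ^+ 2 * ((q - 1) / n%:R) * q).

Let q_ge1 : 1 <= q.
Proof. by rewrite ler_pdivlMr ?mul1r ?ler_nat // ltr0n. Qed.

Let eta_r : eta * (1 + 8 * ((q - 1) / n%:R)) <= 1.
Proof.
have pos : 0 < 1 + 8 / n%:R * (q - 1).
  by rewrite ltr_wpDr // mulr_ge0 ?subr_ge0 // divr_ge0 // ler0n.
have -> : 1 + 8 * ((q - 1) / n%:R) = 1 + 8 / n%:R * (q - 1) by ring.
by rewrite -ler_pdivlMr // div1r.
Qed.

Lemma avg_lyap_step st :
  avg W (fun h => lyap A (rkt_step k eta e (fun i => h i) st)) <= (1 - eta) * lyap A st.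
Proof.
rewrite lyap_coordE mulr_sumr.
under eq_avg do rewrite lyap_coordE; rewrite avg_sum; apply: ler_sum => j _.
rewrite avgD avgMl avg_sum avg_werr_step_sqr (eq_bigr _ (fun i _ => avg_berr_step_sqr st i j)).
have -> : \sum_i (p * werr st j ^+ 2 + (1 - p) * berr st i j ^+ 2)
    = n%:R * p * werr st j ^+ 2 + (1 - p) * \sum_i berr st i j ^+ 2.
  by rewrite big_split /= sumr_const card_ord mulr_sumr; ring.
apply: lyap_contraction => //.
- by rewrite ltr0n.
- exact: sqr_ge0.
- by rewrite sumr_ge0 // => i _; rewrite sqr_ge0.
have -> : 2 * n%:R * werr st j ^+ 2 + 2 * \sum_i berr st i j ^+ 2
    = \sum_i (2 * werr st j ^+ 2 + 2 * berr st i j ^+ 2).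
  by rewrite big_split /= sumr_const card_ord mulr_sumr; ring.
by apply: ler_sum => i _; have := sqr_ge0 (werr st j + berr st i j); lra.
Qed.

Let one_sub_eta_ge0 : 0 <= 1 - eta.
Proof.
have : p <= 1 by rewrite ler_pdivrMr ?mul1r ?ler_nat // ltr0n (leq_trans k_gt0).
by move: eta_le_p; move: (k%:R / d%:R) => x; lra.
Qed.

Lemma avg_lyap_iter w0 T :
  avg (valid_scheds T n d k) (fun f => lyap A (rkt_iter k eta e w0 (sched_of f) T))
  <= (1 - eta) ^+ T * lyap A (w0, fun _ _ => 0).
Proof.
elim: T => [|T IH].
  by rewrite /= avg_cst ?expr0 ?mul1r // valid_schedsE ffuns_on_neq0.
rewrite valid_schedsE (avg_reindex (A := setX (valid_scheds T n d k) W) _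
  (extend_sched_bij _ _ _)); last first.
  by move=> [g h]; rewrite mem_extend_sched in_setX valid_schedsE.
rewrite avg_setX.
under eq_avg do under eq_avg do rewrite rkt_iter_extend /=.
apply: le_trans (ler_avg (fun g _ => avg_lyap_step _)) _.
rewrite avgMl; apply: le_trans (ler_wpM2l one_sub_eta_ge0 IH) _.
by rewrite [(1 - eta) ^+ T.+1]exprS (mulrA (1 - eta)).
Qed.

Let A_le1 : A <= 1.
Proof. by apply: (@lyap_weight_le1 _ eta p) => //; rewrite ltr0n. Qed.

Let A_ge0 : 0 <= A.
Proof.
have eta_ge0 := ltW eta_gt0.
by rewrite !mulr_ge0 ?divr_ge0 ?subr_ge0 ?invr_ge0 ?ler0n.
Qed.

Lemma sqnorm_werr_le_lyap st : sqnorm (werr st) <= lyap A st.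
Proof.
rewrite lerDl mulr_ge0 ?divr_ge0 // sumr_ge0 // => i _.
by rewrite sumr_ge0 // => j _; rewrite sqr_ge0.
Qed.

Lemma lyap_init_le w0 :
  lyap A (w0, fun _ _ => 0)
  <= sqnorm (fun j => w0 j - wstar e j) + n%:R^-1 * \sum_i sqnorm (gradF e i (wstar e)).
Proof.
have berr0 i : sqnorm (berr (w0, fun _ _ => 0) i) = sqnorm (gradF e i (wstar e)).
  by apply: eq_bigr => j _; rewrite /berr sub0r sqrrN.
rewrite /lyap (eq_bigr _ (fun i _ => berr0 i)) lerD2l; apply: ler_wpM2r.
  by rewrite sumr_ge0 // => i _; rewrite sumr_ge0 // => j _; rewrite sqr_ge0.
by rewrite -[X in _ <= X]mul1r; apply: ler_wpM2r; rewrite ?invr_ge0.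
Qed.

Lemma avg_sqnorm_werr_iter w0 T :
  avg (valid_scheds T n d k) (fun f => sqnorm (werr (rkt_iter k eta e w0 (sched_of f) T)))
  <= (1 - eta) ^+ T *
     (sqnorm (fun j => w0 j - wstar e j) + n%:R^-1 * \sum_i sqnorm (gradF e i (wstar e))).
Proof.
apply: le_trans (ler_avg (fun f _ => sqnorm_werr_le_lyap _)) _.
apply: le_trans (avg_lyap_iter w0 T) _.
by apply: ler_wpM2l; [rewrite exprn_ge0 | apply: lyap_init_le].
Qed.

End RandKTemporal.

Theorem theorem4 (R : realType) (n d k : nat) (eta : R)
  (e : 'I_n -> 'I_d -> R) (w0 : 'I_d -> R) :
  (1 <= n)%N -> (1 <= k)%N -> (k <= d)%N -> 0 < eta ->
  eta <= (1 + 8 / n%:R * (d%:R / k%:R - 1))^-1 ->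
  eta <= (k%:R / d%:R) / 2 ->
  forall t : nat,
    expect_sched t.+1 k
      (fun sched => sqnorm (fun j => (rkt_iter k eta e w0 sched t.+1).1 j - wstar e j))
    <= (1 - eta) ^+ t.+1 *
       (sqnorm (fun j => w0 j - wstar e j)
        + n%:R^-1 * \sum_(i < n) sqnorm (gradF e i (wstar e))).
Proof.
move=> n_gt0 k_gt0 k_le_d eta_gt0 eta_le_inv eta_le_p t.
exact: avg_sqnorm_werr_iter.
Qed.
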